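(* Let $E$ be a real or complex Banach lattice, let $u\in E_+$, and let $\varphi\in E'_+$ be strictly positive. For every bounded real linear operator $T:E\to E$, the following are equivalent: (i) there is $c\in[0,\infty)$ such that $|Tx|\le c\,\langle\varphi,|x|\rangle\,u$ for each $x\in E$; (ii) there is $\hat c\in[0,\infty)$ such that $-\hat c\,u\otimes\varphi\le T\le \hat c\,u\otimes\varphi$; (iii) there is a bounded linear operator $\tilde T: E^\varphi\to E_u$ with $k\circ\tilde T\circ j = T$, where $j:E\to E^\varphi$ and $k:E_u\to E$ are the canonical embeddings.
   Context: A bounded operator is real if it maps the real part of $E$ into itself. $\varphi$ strictly positive: $\langle\varphi,f\rangle>0$ for all $0\ne f\in E_+$. $u\otimes\varphi$ is $f\mapsto\langle\varphi,f\rangle u$; inequalities between operators are in the order of positive operators ($S\le T$ iff $T-S$ maps $E_+$ into $E_+$). $E_u=\{x\in E: |x|\le cu \text{ for some } c\ge 0\}$ is the principal ideal, endowed with the gauge norm $\|x\|_u=\inf\{c>0: |x|\le cu\}$. $E^\varphi$ is the completion of $E$ with respect to the norm $\|f\|_\varphi=\langle\varphi,|f|\rangle$. *)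

From mathcomp Require Import all_boot all_order all_algebra.
From mathcomp Require Import all_classical all_reals all_analysis.
Import Order.TTheory GRing.Theory Num.Theory numFieldNormedType.Exports.
Set Implicit Arguments. Unset Strict Implicit. Unset Printing Implicit Defensive.
Local Open Scope ring_scope.
Local Open Scope classical_set_scope.

Section BanachLattice.
Variables (R : realType) (E : completeNormedModType R).

Record vector_lattice (le : E -> E -> Prop) : Prop := {
  vl_refl : forall x, le x x;
  vl_antisym : forall x y, le x y -> le y x -> x = y;
  vl_trans : forall x y z, le x y -> le y z -> le x z;
  vl_add : forall x y z, le x y -> le (x + z) (y + z);
  vl_scale : forall (a : R) x y, 0 <= a -> le x y -> le (a *: x) (a *: y);
  vl_sup : forall x y, exists s, [/\ le x s, le y s &
                                  forall t, le x t -> le y t -> le s t]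
}.

Definition is_lub (le : E -> E -> Prop) (A : set E) (s : E) :=
  (forall a, A a -> le a s) /\ (forall t, (forall a, A a -> le a t) -> le s t).

Definition lsup (le : E -> E -> Prop) (x y : E) : E :=
  xget x (is_lub le [set x; y]).

Definition labs (le : E -> E -> Prop) (x : E) : E := lsup le x (- x).

Definition banach_lattice (le : E -> E -> Prop) : Prop :=
  vector_lattice le /\
  (forall x y, le (labs le x) (labs le y) -> `|x| <= `|y|).

(* |x + iy| = sup_{theta} (cos theta x + sin theta y) *)
Definition cabs (le : E -> E -> Prop) (z : (E * E)%type) : E :=
  xget 0 (is_lub le (range (fun t : R => cos t *: z.1 + sin t *: z.2))).

Definition cmuli (z : (E * E)%type) : (E * E)%type := (- z.2, z.1).

Definition creal (x : E) : (E * E)%type := (x, 0).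

Definition strictly_positive_functional (le : E -> E -> Prop) (phi : E -> R) :=
  [/\ forall (a : R) x y, phi (a *: x + y) = a * phi x + phi y,
      exists C : R, forall x, `|phi x| <= C * `|x|,
      forall x, le 0 x -> 0 <= phi x &
      forall x, le 0 x -> x <> 0 -> 0 < phi x].

(* ---------- generic framework ----------
   V     : the (real or complex) Banach lattice, as a real vector space;
   m     : the modulus V -> E (E = real part of V, E_+ its positive cone);
   J     : multiplication by i (the identity in the real case, so that the
           J-commutation conditions are void there);
   iota  : the embedding of the real part E into V. *)
Variables (le : E -> E -> Prop) (V : lmodType R) (m : V -> E) (J : V -> V)
          (iota : E -> V) (u : E) (phi : E -> R).

Definition vnorm (v : V) : R := `| m v |.

(* linearity over the scalar field (R, resp. C = R + R J) *)
Definition scalar_linear (T : V -> V) :=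
  (forall (a : R) x y, T (a *: x + y) = a *: T x + T y) /\
  (forall x, T (J x) = J (T x)).

Definition bounded_op (T : V -> V) :=
  exists C : R, forall x, vnorm (T x) <= C * vnorm x.

Definition real_op (T : V -> V) := forall x, exists y, T (iota x) = iota y.

Definition posV (v : V) := exists g, le 0 g /\ v = iota g.

Definition cond_i (T : V -> V) :=
  exists c : R, 0 <= c /\ forall x, le (m (T x)) ((c * phi (m x)) *: u).

(* (ii) : -c u(x)phi <= T <= c u(x)phi in the order of positive operators,
   i.e. T + c u(x)phi and c u(x)phi - T map E_+ into E_+ *)
Definition cond_ii (T : V -> V) :=
  exists c : R, 0 <= c /\ forall f, le 0 f ->
    posV (T (iota f) + (c * phi f) *: iota u) /\
    posV ((c * phi f) *: iota u - T (iota f)).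

Definition phinorm (v : V) : R := phi (m v).

(* E^phi is realized as Cauchy sequences (for ||.||_phi) modulo null
   sequences; a map out of E^phi is a map on Cauchy sequences that is
   constant on equivalence classes. *)
Definition phi_cauchy (s : nat -> V) :=
  forall e : R, 0 < e -> exists N, forall p q, (N <= p)%N -> (N <= q)%N ->
    phinorm (s p - s q) < e.

Definition phi_null (s : nat -> V) :=
  forall e : R, 0 < e -> exists N, forall p, (N <= p)%N -> phinorm (s p) < e.

Definition completion_norm (s : nat -> V) : R := limn (fun n => phinorm (s n)).

Definition in_Eu (v : V) := exists c : R, 0 <= c /\ le (m v) (c *: u).

Definition gauge_norm (v : V) : R :=
  inf [set c : R | 0 < c /\ le (m v) (c *: u)].

Definition cond_iii (T : V -> V) :=
  exists Tt : (nat -> V) -> V,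
  [/\
      forall s t, phi_cauchy s -> phi_cauchy t ->
        phi_null (fun n => s n - t n) -> Tt s = Tt t,
      forall s, phi_cauchy s -> in_Eu (Tt s),
      (forall (a : R) s t, phi_cauchy s -> phi_cauchy t ->
         Tt (fun n => a *: s n + t n) = a *: Tt s + Tt t) /\
      (forall s, phi_cauchy s -> Tt (fun n => J (s n)) = J (Tt s)),
      exists C : R, 0 <= C /\ forall s, phi_cauchy s ->
        gauge_norm (Tt s) <= C * completion_norm s &
      (* k o Tt o j = T, j x = class of the constant sequence x *)
      forall x, Tt (fun _ => x) = T x].

Definition prop22_equiv (T : V -> V) :=
  (cond_i T <-> cond_ii T) /\ (cond_ii T <-> cond_iii T).

End BanachLattice.

From mathcomp Require Import all_boot all_order all_algebra.
From mathcomp Require Import all_classical all_reals all_analysis.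
From mathcomp Require Import ring lra.
Import Order.TTheory GRing.Theory Num.Theory numFieldNormedType.Exports.
Set Implicit Arguments. Unset Strict Implicit. Unset Printing Implicit Defensive.
Local Open Scope ring_scope.
Local Open Scope classical_set_scope.

(* The real and the complex case are one argument about an abstract modulus
   [m : V -> E_+]: [|.|] on E, resp. the complex modulus on E + iE.
   (i) -> (ii): for [f >= 0], [|T f| <= c <phi, f> u].
   (ii) -> (i): [x = |x| - (|x| - x)] splits [x] into positive parts, and
   [-<phi, x> <= <phi, |x|>]; a complex [T] is the complexification of its
   restriction to E, and the real estimate passes to the supremum over [t] of
   [cos t x + sin t y].
   (i) -> (iii): by (i), [T] maps [||.||_phi]-Cauchy sequences to u-uniformly
   Cauchy sequences, which converge u-uniformly since the lattice norm makes E
   relatively uniformly complete; the limit defines [T~] on [E^phi].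
   (iii) -> (i): evaluate [T~] on constant sequences and use [|v| <= ||v||_u u].
   The complex modulus exists because the finite suprema of
   [cos t x + sin t y] over finer and finer grids of angles are
   (|x| + |y|)-uniformly Cauchy. *)

Section LinearFun.
Variables (R : pzRingType) (U W : lmodType R) (f : U -> W).
Hypothesis f_lin : linear f.

Lemma lin0 : f 0 = 0.
Proof.
have h := f_lin 1 0 0; rewrite scaler0 addr0 scale1r in h.
by apply: (addrI (f 0)); rewrite addr0 -h.
Qed.

Lemma linD x y : f (x + y) = f x + f y.
Proof. by rewrite -[x]scale1r f_lin !scale1r. Qed.

Lemma linZ a x : f (a *: x) = a *: f x.
Proof. by rewrite -[a *: x]addr0 f_lin lin0 addr0. Qed.

Lemma linN x : f (- x) = - f x.
Proof. by rewrite -scaleN1r linZ scaleN1r. Qed.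

Lemma linB x y : f (x - y) = f x - f y.
Proof. by rewrite linD linN. Qed.

End LinearFun.

Lemma periodicz (U V : zmodType) (f : U -> V) (T : U) :
  periodic f T -> forall (k : int) a, f (a + T *~ k) = f a.
Proof.
move=> fT [n|n] a; first exact: periodicn.
by rewrite NegzE mulrNz -[in RHS](subrK (T *+ n.+1) a) periodicn.
Qed.

Section RealFacts.
Variable R : realType.

Lemma cos_sin_unif_cont (e : R) : 0 < e -> exists2 d : R, 0 < d &
  forall a b, `|a - b| < d -> `|cos a - cos b| <= e /\ `|sin a - sin b| <= e.
Proof.
move=> e0; have e20 : 0 < e / 2 by rewrite divr_gt0.
(* By the addition formulas, continuity at [0] suffices. *)
have near0 : \forall t \near (0 : R),
    `|cos 0 - cos t| <= e / 2 /\ `|sin 0 - sin t| <= e / 2.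
  near=> t; split; near: t.
  - exact: (cvgr_dist_le _ _ (@continuous_cos R 0) _ e20).
  - exact: (cvgr_dist_le _ _ (@continuous_sin R 0) _ e20).
have [d d0 Hd] := (nbhs_ballP _ _).1 near0.
exists d => // a b ab.
have [] := Hd (a - b); first by rewrite -ball_normE /= sub0r normrN.
rewrite cos0 sin0 sub0r normrN distrC => hc hs.
have [-> ->] : cos a = cos (b + (a - b)) /\ sin a = sin (b + (a - b)).
  by rewrite addrC subrK.
move: (a - b) hc hs => t hc hs; rewrite cosD sinD.
have hcb := cos_max b; have hsb := sin_max b.
split.
- have -> : cos b * cos t - sin b * sin t - cos b = cos b * (cos t - 1) - sin b * sin t by ring.
  apply: (le_trans (ler_normB _ _)); rewrite !normrM (splitr e).
  by apply: lerD; rewrite -[_ / 2]mul1r; apply: ler_pM.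
- have -> : sin b * cos t + cos b * sin t - sin b = sin b * (cos t - 1) + cos b * sin t by ring.
  apply: (le_trans (ler_normD _ _)); rewrite !normrM (splitr e).
  by apply: lerD; rewrite -[_ / 2]mul1r; apply: ler_pM.
Unshelve. all: by end_near.
Qed.

Lemma cos_sin_net (e : R) : 0 < e -> exists (d : R) (K : nat), forall t,
  exists2 k : nat, (k <= K)%N &
    `|cos t - cos (k%:R * d)| <= e /\ `|sin t - sin (k%:R * d)| <= e.
Proof.
move=> e0; have [d d0 Hd] := cos_sin_unif_cont e0.
have pi2_gt0 : 0 < pi *+ 2 :> R by rewrite mulrn_wgt0 // pi_gt0.
exists d, (Num.truncn (pi *+ 2 / d)) => t.
pose t' := t + (pi *+ 2) *~ - Num.floor (t / (pi *+ 2)).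
have /andP[t'_ge0 t'_lt] : 0 <= t' < pi *+ 2.
  rewrite /t' mulrNz -mulrzl; set k := Num.floor _.
  have /andP[h1 h2] := floor_itv (t / (pi *+ 2)); rewrite -/k in h1 h2.
  rewrite ler_pdivlMr // in h1; rewrite ltr_pdivrMr // intrD mulrDl mul1r in h2.
  by apply/andP; split; lra.
have [-> ->] : cos t = cos t' /\ sin t = sin t'.
  by rewrite /t' !periodicz //; [exact: sinD2pi | exact: cosD2pi].
have /andP[k_le k_gt] := truncn_itv (divr_ge0 t'_ge0 (ltW d0)).
exists (Num.truncn (t' / d)).
  by apply: le_truncn; rewrite ler_pM2r ?invr_gt0 // ltW.
apply: Hd; rewrite ger0_norm; last by rewrite subr_ge0 -ler_pdivlMr.
by move: k_gt; rewrite -natr1 ltr_pdivrMr // mulrDl mul1r; lra.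
Qed.

Lemma divDr1_mul_lt (c e : R) : 0 <= c -> 0 < e -> e / (c + 1) * c < e.
Proof.
move=> c0 e0; have c1 : 0 < c + 1 by rewrite ltr_wpDl.
by rewrite mulrAC ltr_pdivrMr // ltr_pM2l // ltrDl.
Qed.

Lemma cauchy_seq_cvgn (V : completeNormedModType R) (v : nat -> V) :
  (forall e : R, 0 < e -> exists N, forall p q, (N <= p)%N -> (N <= q)%N ->
     `|v p - v q| < e) ->
  cvgn v.
Proof.
move=> H; apply/cauchy_cvgP; apply/cauchy_exP => e e0.
have [N HN] := H e e0; exists (v N); exists N => // n /= Nn.
by rewrite -ball_normE /=; exact: HN (leqnn N) Nn.
Qed.

End RealFacts.

Section VectorLattice.
Variables (R : realType) (E : completeNormedModType R) (le : E -> E -> Prop).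
Hypothesis vl : vector_lattice le.
Local Notation lab := (labs le).

Lemma vle_refl x : le x x. Proof. exact: vl_refl vl x. Qed.

Lemma vle_anti x y : le x y -> le y x -> x = y. Proof. exact: (vl_antisym vl). Qed.

Lemma vle_trans y x z : le x y -> le y z -> le x z. Proof. exact: (vl_trans vl). Qed.

Lemma vlerD2r z x y : le x y -> le (x + z) (y + z). Proof. exact: (vl_add vl). Qed.

Lemma vlerD2l z x y : le x y -> le (z + x) (z + y).
Proof. by rewrite ![z + _]addrC; apply: vlerD2r. Qed.

Lemma vlerD x y x' y' : le x y -> le x' y' -> le (x + x') (y + y').
Proof. by move=> h h'; apply: vle_trans (vlerD2r x' h) (vlerD2l y h'). Qed.

Lemma vlerBlD x y z : le (x - y) z <-> le x (y + z).
Proof.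
split=> h; first by have := vlerD2l y h; rewrite addrCA subrr addr0.
by have := vlerD2r (- y) h; rewrite addrAC subrr add0r.
Qed.

Lemma vsubr_ge0 x y : le 0 (y - x) <-> le x y.
Proof.
split=> h; first by have := vlerD2r x h; rewrite add0r subrK.
by have := vlerD2r (- x) h; rewrite subrr.
Qed.

Lemma vsubr_le0 x y : le (x - y) 0 <-> le x y.
Proof.
split=> h; first by have := vlerD2r y h; rewrite subrK add0r.
by have := vlerD2r (- y) h; rewrite subrr.
Qed.

Lemma vlerN2 x y : le x y -> le (- y) (- x).
Proof. by move=> /vsubr_ge0 h; apply/vsubr_ge0; rewrite opprK addrC. Qed.

Lemma vlerZ2l (a : R) x y : 0 <= a -> le x y -> le (a *: x) (a *: y).
Proof. exact: (vl_scale vl). Qed.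

Lemma vscaler_ge0 (a : R) x : 0 <= a -> le 0 x -> le 0 (a *: x).
Proof. by move=> a0 /(vlerZ2l a0); rewrite scaler0. Qed.

Lemma vlerZ2r (a b : R) x : a <= b -> le 0 x -> le (a *: x) (b *: x).
Proof.
by move=> ab x0; apply/vsubr_ge0; rewrite -scalerBl; apply: vscaler_ge0; rewrite ?subr_ge0.
Qed.

Lemma lsupP x y : is_lub le [set x; y] (lsup le x y).
Proof.
have [s [xs ys s_least]] := vl_sup vl x y; apply: xgetPex; exists s; split.
  by move=> a [->|->].
by move=> t t_ub; apply: s_least; apply: t_ub; [left|right].
Qed.

Lemma lsup_ubl x y : le x (lsup le x y). Proof. by apply: (lsupP x y).1; left. Qed.

Lemma lsup_ubr x y : le y (lsup le x y). Proof. by apply: (lsupP x y).1; right. Qed.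

Lemma lsup_le x y t : le x t -> le y t -> le (lsup le x y) t.
Proof. by move=> xt yt; apply: (lsupP x y).2 => a [->|->]. Qed.

Lemma vl_finite_sup (f : nat -> E) (K : nat) : exists g,
  (forall k, (k <= K)%N -> le (f k) g) /\
  (forall b, (forall k, (k <= K)%N -> le (f k) b) -> le g b).
Proof.
elim: K => [|K [g [g_ub g_least]]].
  exists (f 0%N); split; last by move=> b; apply.
  by move=> k; rewrite leqn0 => /eqP ->; apply: vle_refl.
exists (lsup le g (f K.+1)); split.
  move=> k; rewrite leq_eqVlt => /orP[/eqP ->|]; first exact: lsup_ubr.
  by rewrite ltnS => kK; apply: vle_trans (g_ub _ kK) (lsup_ubl _ _).
move=> b b_ub; apply: lsup_le; last exact: b_ub.
by apply: g_least => k kK; apply: b_ub; rewrite ltnW.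
Qed.

Lemma labs_ge x : le x (lab x). Proof. exact: lsup_ubl. Qed.

Lemma labs_geN x : le (- x) (lab x). Proof. exact: lsup_ubr. Qed.

Lemma labs_le x t : le x t -> le (- x) t -> le (lab x) t. Proof. exact: lsup_le. Qed.

Lemma labs_ge0 x : le 0 (lab x).
Proof.
have := vlerD (labs_ge x) (labs_geN x); rewrite subrr.
have half_ge0 : 0 <= (2 : R)^-1 by rewrite invr_ge0.
move=> /(vscaler_ge0 half_ge0).
by rewrite -mulr2n -[lab x *+ 2]scaler_nat scalerA mulVf ?pnatr_eq0 // scale1r.
Qed.

Lemma ger0_labs x : le 0 x -> lab x = x.
Proof.
move=> x0; apply: vle_anti; last exact: labs_ge.
apply: labs_le (vle_refl x) _.
by have := vlerN2 x0; rewrite oppr0 => /vle_trans; apply.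
Qed.

Lemma labs0 : lab 0 = 0. Proof. exact/ger0_labs/vle_refl. Qed.

Lemma labsD_le x y : le (lab (x + y)) (lab x + lab y).
Proof.
apply: labs_le; first exact: vlerD (labs_ge x) (labs_ge y).
by rewrite opprD; apply: vlerD (labs_geN x) (labs_geN y).
Qed.

Lemma labsZ_le (a : R) x : le (lab (a *: x)) (`|a| *: lab x).
Proof.
have [a0|a0] := leP 0 a.
  rewrite ger0_norm //; apply: labs_le; first exact: vlerZ2l (labs_ge x).
  by rewrite -scalerN; apply: vlerZ2l (labs_geN x).
have Na0 : 0 <= - a by rewrite oppr_ge0 ltW.
rewrite ltr0_norm //; apply: labs_le.
  by rewrite -[a *: x]opprK -scaleNr -scalerN; apply: vlerZ2l (labs_geN x).
by rewrite -scaleNr; apply: vlerZ2l (labs_ge x).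
Qed.

Lemma vlerZ_labs (a b : R) x : `|a| <= b -> le (a *: x) (b *: lab x).
Proof.
move=> ab; apply: vle_trans (labs_ge _) _; apply: vle_trans (labsZ_le a x) _.
exact: vlerZ2r ab (labs_ge0 x).
Qed.

Lemma positive_functional_linear phi :
  strictly_positive_functional le phi -> linear (phi : E -> R^o).
Proof. by case. Qed.

Lemma positive_functional_ge0 phi x :
  strictly_positive_functional le phi -> le 0 x -> 0 <= phi x.
Proof. by case=> _ _ + _; apply. Qed.

Lemma positive_functional_mono phi x y :
  strictly_positive_functional le phi -> le x y -> phi x <= phi y.
Proof.
move=> phi_pos /vsubr_ge0 /(positive_functional_ge0 phi_pos).
by rewrite (linB (positive_functional_linear phi_pos)) subr_ge0.
Qed.

Record is_modulus (V : lmodType R) (m : V -> E) : Prop := {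
  modulus_ge0 : forall v, le 0 (m v);
  modulus_triangle : forall v w, le (m (v + w)) (m v + m w);
  modulus_scale : forall (a : R) v, le (m (a *: v)) (`|a| *: m v);
  modulus_eq0 : forall v, le (m v) 0 -> v = 0 }.

Definition ru_cauchy (V : lmodType R) (m : V -> E) (h : E) (v : nat -> V) :=
  forall e : R, 0 < e -> exists N, forall p q, (N <= p)%N -> (N <= q)%N ->
    le (m (v p - v q)) (e *: h).

Definition ru_cvg (V : lmodType R) (m : V -> E) (h : E) (v : nat -> V) (w : V) :=
  forall e : R, 0 < e -> \forall n \near \oo, le (m (v n - w)) (e *: h).

Section LatticeNorm.
Hypothesis lattice_norm : forall x y, le (lab x) (lab y) -> `|x| <= `|y|.

Lemma labs_le0 x : le (lab x) 0 -> x = 0.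
Proof.
by move=> x0; have := @lattice_norm x 0; rewrite labs0 normr0 normr_le0 => /(_ x0) /eqP.
Qed.

Lemma norm_vle x y : le 0 x -> le x y -> `|x| <= `|y|.
Proof.
move=> x0 xy; apply: lattice_norm; rewrite !ger0_labs //; exact: vle_trans x0 xy.
Qed.

Lemma norm_labs x : `|lab x| = `|x|.
Proof.
apply/eqP; rewrite eq_le; apply/andP; split; apply: lattice_norm;
  rewrite (ger0_labs (labs_ge0 x)); exact: vle_refl.
Qed.

Lemma vle0_small x :
  (forall e : R, 0 < e -> exists z, [/\ le 0 z, le x z & `|z| < e]) -> le x 0.
Proof.
move=> small; pose p := lsup le x 0.
suff p0 : p = 0 by rewrite -p0; exact: lsup_ubl.
apply/normr0_eq0/eqP; rewrite eq_le normr_ge0 andbT leNgt; apply/negP => p_gt0.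
have [z [z0 xz zp]] := small _ p_gt0.
by have := norm_vle (lsup_ubr x 0) (lsup_le xz z0); rewrite leNgt zp.
Qed.

Lemma vle_addZgt0 h x y :
  le 0 h -> (forall e : R, 0 < e -> le x (y + e *: h)) -> le x y.
Proof.
move=> h0 near_y; apply/vsubr_le0; apply: vle0_small => e e0.
have d0 : 0 < e / (`|h| + 1) by rewrite divr_gt0 // ltr_wpDl.
exists ((e / (`|h| + 1)) *: h); split.
- exact: vscaler_ge0 (ltW d0) h0.
- by apply/vlerBlD; apply: near_y.
- by rewrite normrZ gtr0_norm // divDr1_mul_lt.
Qed.

Lemma ru_complete h v : le 0 h -> ru_cauchy lab h v -> exists w, ru_cvg lab h v w.
Proof.
move=> h0 v_cauchy.
have v_cvg : cvgn v.
  apply: cauchy_seq_cvgn => e e0.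
  have d0 : 0 < e / (`|h| + 1) by rewrite divr_gt0 // ltr_wpDl.
  have [N HN] := v_cauchy _ d0; exists N => p q Np Nq.
  rewrite -norm_labs; apply: le_lt_trans (norm_vle (labs_ge0 _) (HN _ _ Np Nq)) _.
  by rewrite normrZ gtr0_norm // divDr1_mul_lt.
exists (limn v) => e e0; have [N HN] := v_cauchy e e0.
exists N => // p /= Np; apply/vsubr_le0; apply: vle0_small => d d0.
have [M _ HM] := cvgr_dist_lt _ _ v_cvg _ d0.
pose q := maxn N M.
exists (lab (v q - limn v)); split; first exact: labs_ge0.
- have -> : v p - limn v = (v p - v q) + (v q - limn v) by rewrite addrA subrK.
  apply/vlerBlD; apply: vle_trans (labsD_le _ _) _.
  by apply: vlerD2r; apply: HN; rewrite ?leq_maxl.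
- by rewrite norm_labs distrC; apply: HM; rewrite /= leq_maxr.
Qed.

Lemma lub_of_approx (A : set E) h : le 0 h ->
  (forall e : R, 0 < e -> exists s, (forall a, A a -> le a (s + e *: h)) /\
     (forall b, (forall a, A a -> le a b) -> le s b)) ->
  exists s, is_lub le A s.
Proof.
move=> h0 approx.
have inv_gt0 n : 0 < (n.+1%:R : R)^-1 by rewrite invr_gt0.
have [s s_approx] := choice (fun n => approx _ (inv_gt0 n)).
have s_le p q : le (s p) (s q + q.+1%:R^-1 *: h).
  by apply: (s_approx p).2 => a /(s_approx q).1.
have [S s_cvg] : exists S, ru_cvg lab h s S.
  apply: (ru_complete h0) => e e0.
  have [N _ N_small] := near_infty_natSinv_lt (PosNum e0).
  exists N => p q Np Nq; apply: labs_le; last rewrite opprB; apply/vlerBlD;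
    apply: vle_trans (s_le _ _) (vlerD2l _ (vlerZ2r _ h0)); apply: ltW; by apply: N_small.
exists S; split.
- move=> a Aa; apply: (vle_addZgt0 h0) => e e0.
  have e20 : 0 < e / 2 by rewrite divr_gt0.
  have [N _ N_small] := near_infty_natSinv_lt (PosNum e20).
  have [M _ M_close] := s_cvg _ e20.
  pose p := maxn N M.
  apply: vle_trans ((s_approx p).1 a Aa) _.
  rewrite (splitr e) scalerDl addrA; apply: vlerD.
  + apply/vlerBlD; apply: vle_trans (labs_ge _) _; apply: M_close; exact: leq_maxr.
  + apply: vlerZ2r h0; apply: ltW; apply: N_small; exact: leq_maxl.
- move=> b b_ub; apply: (vle_addZgt0 h0) => e e0.
  have [N _ N_close] := s_cvg _ e0.
  apply: vle_trans (_ : le S (s N + e *: h)) (vlerD2r _ ((s_approx N).2 b b_ub)).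
  apply/vlerBlD; have := labs_geN (s N - S); rewrite opprB => /vle_trans; apply.
  by apply: (N_close N) => /=.
Qed.

Local Notation cab := (cabs le).
Local Notation cmuli := (@cmuli R E).
Local Notation creal := (@creal R E).

Definition cproj (z : E * E) (t : R) : E := cos t *: z.1 + sin t *: z.2.

Lemma cproj_sub_le z t t0 (e : R) :
  `|cos t - cos t0| <= e -> `|sin t - sin t0| <= e ->
  le (cproj z t - cproj z t0) (e *: (lab z.1 + lab z.2)).
Proof.
move=> hc hs; rewrite /cproj opprD addrACA -!scalerBl scalerDr.
exact: vlerD (vlerZ_labs _ hc) (vlerZ_labs _ hs).
Qed.

Lemma cproj_approx_sup z (e : R) : 0 < e -> exists s,
  (forall t, le (cproj z t) (s + e *: (lab z.1 + lab z.2))) /\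
  (forall b, (forall t, le (cproj z t) b) -> le s b).
Proof.
move=> e0; have [d [K net]] := cos_sin_net e0.
have [g [g_ub g_least]] := vl_finite_sup (fun k => cproj z (k%:R * d)) K.
exists g; split => [t|b b_ub]; last by apply: g_least => k _; apply: b_ub.
have [k kK [hc hs]] := net t.
rewrite -(subrK (cproj z (k%:R * d)) (cproj z t)) addrC.
exact: vlerD (g_ub k kK) (cproj_sub_le z hc hs).
Qed.

Lemma cabs_is_lub z : is_lub le (range (cproj z)) (cab z).
Proof.
apply: xgetPex; apply: (@lub_of_approx _ (lab z.1 + lab z.2)).
  by have := vlerD (labs_ge0 z.1) (labs_ge0 z.2); rewrite addr0.
move=> e e0; have [s [s_ub s_least]] := cproj_approx_sup z e0.
exists s; split => [_ [t _ <-]|b b_ub]; first exact: s_ub.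
by apply: s_least => t; apply: b_ub; exists t.
Qed.

Lemma cproj_le_cabs z t : le (cproj z t) (cab z).
Proof. by apply: (cabs_is_lub z).1; exists t. Qed.

Lemma cabs_le z b : (forall t, le (cproj z t) b) -> le (cab z) b.
Proof. by move=> z_le; apply: (cabs_is_lub z).2 => _ [t _ <-]. Qed.

Lemma cprojDpi z t : cproj z (t + pi) = - cproj z t.
Proof. by rewrite /cproj cosDpi sinDpi !scaleNr opprD. Qed.

Lemma labs_cproj_le z t : le (lab (cproj z t)) (cab z).
Proof. by apply: labs_le; rewrite -?cprojDpi; apply: cproj_le_cabs. Qed.

Lemma cabs_ge0 z : le 0 (cab z).
Proof. exact: vle_trans (labs_ge0 _) (labs_cproj_le z 0). Qed.

Lemma labs_fst_le z : le (lab z.1) (cab z).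
Proof.
by have := labs_cproj_le z 0; rewrite /cproj cos0 sin0 scale1r scale0r addr0.
Qed.

Lemma labs_snd_le z : le (lab z.2) (cab z).
Proof.
have := labs_cproj_le z (pi / 2).
by rewrite /cproj cos_pihalf sin_pihalf scale1r scale0r add0r.
Qed.

Lemma cabs_le_sum z : le (cab z) (lab z.1 + lab z.2).
Proof.
by apply: cabs_le => t; apply: vlerD; rewrite -[lab _]scale1r; apply: vlerZ_labs;
  [exact: cos_max | exact: sin_max].
Qed.

Lemma cabs_creal x : cab (creal x) = lab x.
Proof.
apply: vle_anti; last exact: labs_fst_le (creal x).
apply: cabs_le => t; rewrite /cproj /= scaler0 addr0 -[lab x]scale1r.
exact: vlerZ_labs (cos_max t).
Qed.

Lemma cabs_modulus : is_modulus cab.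
Proof.
split.
- exact: cabs_ge0.
- move=> z w; apply: cabs_le => t.
  have -> : cproj (z + w) t = cproj z t + cproj w t by rewrite /cproj !scalerDr addrACA.
  exact: vlerD (cproj_le_cabs z t) (cproj_le_cabs w t).
- move=> a z; apply: cabs_le => t.
  have -> : cproj (a *: z) t = a *: cproj z t.
    by rewrite /cproj scalerDr !scalerA [a * _]mulrC [a * sin t]mulrC.
  apply: vle_trans (vlerZ_labs _ (lexx _)) _; apply: vlerZ2l => //.
  exact: labs_cproj_le.
- case=> x y z0.
  have /= -> := labs_le0 (vle_trans (labs_fst_le (x, y)) z0).
  by have /= -> := labs_le0 (vle_trans (labs_snd_le (x, y)) z0).
Qed.

Lemma cabs_cmuli_le z : le (cab (cmuli z)) (cab z).
Proof.
apply: cabs_le => t.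
have -> : cproj (cmuli z) t = cproj z (t - pi / 2).
  by rewrite /cproj /= cosBpihalf sinBpihalf scalerN scaleNr addrC.
exact: cproj_le_cabs.
Qed.

Lemma cabs_ru_complete h v : le 0 h -> ru_cauchy cab h v -> exists w, ru_cvg cab h v w.
Proof.
move=> h0 v_cauchy.
have [w1 v1_cvg] : exists w, ru_cvg lab h (fun n => (v n).1) w.
  apply: (ru_complete h0) => e e0; have [N HN] := v_cauchy e e0.
  by exists N => p q Np Nq; apply: vle_trans (labs_fst_le _) (HN p q Np Nq).
have [w2 v2_cvg] : exists w, ru_cvg lab h (fun n => (v n).2) w.
  apply: (ru_complete h0) => e e0; have [N HN] := v_cauchy e e0.
  by exists N => p q Np Nq; apply: vle_trans (labs_snd_le _) (HN p q Np Nq).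
exists (w1, w2) => e e0; have e20 : 0 < e / 2 by rewrite divr_gt0.
near=> n; apply: vle_trans (cabs_le_sum _) _; rewrite (splitr e) scalerDl.
by apply: vlerD; near: n; [exact: v1_cvg | exact: v2_cvg].
Unshelve. all: by end_near.
Qed.

Lemma labs_modulus : is_modulus lab.
Proof. split; [exact: labs_ge0 | exact: labsD_le | exact: labsZ_le | exact: labs_le0]. Qed.

Section Modulus.
Variables (V : lmodType R) (m : V -> E) (u : E).
Hypotheses (m_mod : is_modulus m) (u_ge0 : le 0 u).

Lemma modulus0 : m 0 = 0.
Proof.
apply: vle_anti (modulus_ge0 m_mod 0).
by have := modulus_scale m_mod 0 0; rewrite scale0r normr0 scale0r.
Qed.

Lemma modulusN v : m (- v) = m v.
Proof.
apply: vle_anti; [have := modulus_scale m_mod (-1) v | have := modulus_scale m_mod (-1) (- v)];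
  by rewrite ?scaleN1r ?opprK normrN normr1 scale1r.
Qed.

Lemma modulusB v w : m (v - w) = m (w - v).
Proof. by rewrite -opprB modulusN. Qed.

Lemma modulus_split x v w : le (m (v - w)) (m (v - x) + m (x - w)).
Proof. by have := modulus_triangle m_mod (v - x) (x - w); rewrite addrA subrK. Qed.

Lemma ru_cvg_uniq v w w' : ru_cvg m u v w -> ru_cvg m u v w' -> w = w'.
Proof.
move=> vw vw'; apply/eqP; rewrite -subr_eq0; apply/eqP/(modulus_eq0 m_mod).
apply: (vle_addZgt0 u_ge0) => e e0; rewrite add0r.
have e20 : 0 < e / 2 by rewrite divr_gt0.
near \oo => n.
apply: vle_trans (modulus_split (v n) _ _) _.
rewrite (splitr e) scalerDl modulusB; apply: vlerD; near: n; [exact: vw | exact: vw'].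
Unshelve. all: by end_near.
Qed.

Lemma ru_cvg_eqlim v v' w :
  ru_cvg m u v w -> ru_cvg m u (fun n => v' n - v n) 0 -> ru_cvg m u v' w.
Proof.
move=> vw vv' e e0; have e20 : 0 < e / 2 by rewrite divr_gt0.
near=> n; apply: vle_trans (modulus_split (v n) _ _) _.
rewrite (splitr e) scalerDl; apply: vlerD; near: n; last exact: vw.
by apply: filterS (vv' _ e20) => n; rewrite subr0.
Unshelve. all: by end_near.
Qed.

Lemma ru_cvgZD (a : R) v v' w w' : ru_cvg m u v w -> ru_cvg m u v' w' ->
  ru_cvg m u (fun n => a *: v n + v' n) (a *: w + w').
Proof.
move=> vw vw' e e0; have e20 : 0 < e / 2 by rewrite divr_gt0.
have d0 : 0 < e / 2 / (`|a| + 1) by rewrite divr_gt0 // ltr_wpDl.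
near=> n.
have -> : a *: v n + v' n - (a *: w + w') = a *: (v n - w) + (v' n - w').
  by rewrite scalerBr opprD addrACA.
apply: vle_trans (modulus_triangle m_mod _ _) _.
rewrite (splitr e) scalerDl; apply: vlerD; last by near: n; exact: vw'.
apply: vle_trans (modulus_scale m_mod _ _) _.
apply: vle_trans (vlerZ2l (normr_ge0 a) (_ : le _ ((e / 2 / (`|a| + 1)) *: u))) _.
  by near: n; exact: vw.
by rewrite scalerA; apply: vlerZ2r u_ge0; rewrite mulrC ltW // divDr1_mul_lt.
Unshelve. all: by end_near.
Qed.

Lemma ru_cvg_cst w : ru_cvg m u (fun _ => w) w.
Proof.
by move=> e e0; near=> n; rewrite subrr modulus0; apply: vscaler_ge0 (ltW e0) u_ge0.
Unshelve. all: by end_near.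
Qed.

Lemma ru_cvg_contraction (f : V -> V) v w : linear f -> (forall x, le (m (f x)) (m x)) ->
  ru_cvg m u v w -> ru_cvg m u (fun n => f (v n)) (f w).
Proof.
move=> f_lin f_le vw e e0; apply: filterS (vw _ e0) => n.
by rewrite -(linB f_lin); apply: vle_trans (f_le _).
Qed.

Lemma ru_cvg_in_Eu v w : ru_cvg m u v w -> (forall n, in_Eu le m u (v n)) -> in_Eu le m u w.
Proof.
move=> vw v_Eu; have [N _ HN] := vw _ ltr01.
have [c [c0 vN_le]] := v_Eu N.
exists (1 + c); split; first by rewrite addr_ge0.
have := modulus_triangle m_mod (w - v N) (v N); rewrite subrK => /vle_trans; apply.
by rewrite scalerDl modulusB; apply: vlerD vN_le; apply: HN => /=.
Qed.

Definition ru_lim v := xget 0 (ru_cvg m u v).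

Lemma ru_limP v : (exists w, ru_cvg m u v w) -> ru_cvg m u v (ru_lim v).
Proof. exact: xgetPex. Qed.

Lemma ru_limE v w : ru_cvg m u v w -> ru_lim v = w.
Proof. by move=> vw; apply: ru_cvg_uniq (ru_limP (ex_intro _ w vw)) vw. Qed.

Lemma le_gauge_norm v : in_Eu le m u v -> le (m v) (gauge_norm le m u v *: u).
Proof.
move=> [c [c0 vc]]; set S := [set c | 0 < c /\ le (m v) (c *: u)].
have S_ne : S !=set0.
  exists (c + 1); split; first by rewrite ltr_wpDl.
  by apply: vle_trans vc (vlerZ2r _ u_ge0); rewrite lerDl.
apply: (vle_addZgt0 u_ge0) => e e0; rewrite -scalerDl.
have [y [_ vy] y_lt] : exists2 y, S y & y < inf S + e by apply: inf_lt; rewrite ?ltrDl.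
by apply: vle_trans vy (vlerZ2r (ltW y_lt) u_ge0).
Qed.

Lemma gauge_norm_le (b : R) v : 0 <= b ->
  (forall e : R, 0 < e -> le (m v) ((b + e) *: u)) -> gauge_norm le m u v <= b.
Proof.
move=> b0 vb; apply/ler_addgt0Pr => e e0.
apply: ge_inf; first by exists 0 => y [/ltW].
by split; [exact: ltr_wpDl | exact: vb].
Qed.

Section Operator.
Variables (J : V -> V) (iota : E -> V) (phi : E -> R) (T : V -> V).
Hypotheses (phi_pos : strictly_positive_functional le phi)
  (J_lin : linear J) (m_J : forall v, le (m (J v)) (m v))
  (iota_lin : linear iota) (m_iota : forall x, m (iota x) = lab x)
  (m_complete : forall v, ru_cauchy m u v -> exists w, ru_cvg m u v w)
  (T_lin : scalar_linear J T).

Let phi_lin := positive_functional_linear phi_pos.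

Lemma phinorm_ge0 v : 0 <= phinorm m phi v.
Proof. exact: positive_functional_ge0 phi_pos (modulus_ge0 m_mod v). Qed.

Lemma phinormD_le v w : phinorm m phi (v + w) <= phinorm m phi v + phinorm m phi w.
Proof.
rewrite /phinorm -(linD phi_lin).
exact: positive_functional_mono phi_pos (modulus_triangle m_mod v w).
Qed.

Lemma dist_phinorm_le v w : `|phinorm m phi v - phinorm m phi w| <= phinorm m phi (v - w).
Proof.
move: (phinormD_le (v - w) w) (phinormD_le (w - v) v).
rewrite !subrK /phinorm (modulusB w v) ler_distl => h1 h2.
by apply/andP; split; lra.
Qed.

Lemma phinorm_cvg s : phi_cauchy m phi s -> cvgn (fun n => phinorm m phi (s n)).
Proof.
move=> s_cauchy; apply: (@cauchy_seq_cvgn _ R^o) => e e0.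
have [N HN] := s_cauchy e e0; exists N => p q Np Nq.
exact: le_lt_trans (dist_phinorm_le _ _) (HN p q Np Nq).
Qed.

Lemma completion_norm_ge0 s : phi_cauchy m phi s -> 0 <= completion_norm m phi s.
Proof.
move=> s_cauchy; apply: limr_ge (phinorm_cvg s_cauchy) _.
by near=> n; exact: phinorm_ge0.
Unshelve. all: by end_near.
Qed.

Lemma cond_i_ii : real_op iota T -> cond_i le m u phi T -> cond_ii le iota u phi T.
Proof.
move=> T_real [c [c0 Tc]]; exists c; split => // f f0.
have [y Ty] := T_real f.
have y_le : le (lab y) ((c * phi f) *: u).
  by have := Tc (iota f); rewrite Ty !m_iota (ger0_labs f0).
split.
- exists (y + (c * phi f) *: u); split.
    by have := vle_trans (labs_geN y) y_le; move/vsubr_ge0; rewrite opprK addrC.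
  by rewrite Ty (linD iota_lin) (linZ iota_lin).
- exists ((c * phi f) *: u - y); split.
    by apply/vsubr_ge0; exact: vle_trans (labs_ge y) y_le.
  by rewrite Ty (linB iota_lin) (linZ iota_lin).
Qed.

Lemma cond_iii_i : cond_iii le m J u phi T -> cond_i le m u phi T.
Proof.
move=> [Tt [_ Tt_Eu _ [C [C0 Tt_bound]] Tt_T]]; exists C; split => // x.
have x_cauchy : phi_cauchy m phi (fun _ => x).
  by move=> e e0; exists 0%N => p q _ _; rewrite /phinorm subrr modulus0 (lin0 phi_lin).
have := Tt_bound _ x_cauchy; have := Tt_Eu _ x_cauchy; rewrite Tt_T => /le_gauge_norm Tx_le.
rewrite /completion_norm /phinorm norm_lim_cst => gauge_le.
exact: vle_trans Tx_le (vlerZ2r gauge_le u_ge0).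
Qed.

Definition completion_ext s := ru_lim (fun n => T (s n)).

Lemma completion_ext_cst x : completion_ext (fun _ => x) = T x.
Proof. exact/ru_limE/ru_cvg_cst. Qed.

Section Bounded.
Variable c : R.
Hypotheses (c0 : 0 <= c) (Tc : forall x, le (m (T x)) ((c * phi (m x)) *: u)).

Let c1_gt0 : 0 < c + 1. Proof. by rewrite ltr_wpDl. Qed.

Lemma cond_i_small v (e : R) : 0 < e ->
  phinorm m phi v < e / (c + 1) -> le (m (T v)) (e *: u).
Proof.
move=> e0 v_small; apply: vle_trans (Tc v) (vlerZ2r _ u_ge0).
rewrite mulrC; apply: ltW; apply: le_lt_trans (divDr1_mul_lt c0 e0).
by rewrite ler_wpM2r // ltW.
Qed.

Lemma completion_ext_cvg s : phi_cauchy m phi s ->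
  ru_cvg m u (fun n => T (s n)) (completion_ext s).
Proof.
move=> s_cauchy; apply/ru_limP/m_complete => e e0.
have [N HN] := s_cauchy _ (divr_gt0 e0 c1_gt0).
by exists N => p q Np Nq; rewrite -(linB T_lin.1); exact: cond_i_small e0 (HN p q Np Nq).
Qed.

Lemma completion_ext_wd s t : phi_cauchy m phi s -> phi_cauchy m phi t ->
  phi_null m phi (fun n => s n - t n) -> completion_ext s = completion_ext t.
Proof.
move=> s_cauchy t_cauchy st_null; apply: ru_limE.
apply: ru_cvg_eqlim (completion_ext_cvg t_cauchy) _ => e e0.
have [N HN] := st_null _ (divr_gt0 e0 c1_gt0).
by exists N => // n /= Nn; rewrite subr0 -(linB T_lin.1); exact: cond_i_small e0 (HN n Nn).
Qed.

Lemma completion_ext_Eu s : phi_cauchy m phi s -> in_Eu le m u (completion_ext s).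
Proof.
move=> s_cauchy; apply: ru_cvg_in_Eu (completion_ext_cvg s_cauchy) _ => n.
by exists (c * phi (m (s n))); split; [rewrite mulr_ge0 ?phinorm_ge0 | exact: Tc].
Qed.

Lemma completion_extZD (a : R) s t : phi_cauchy m phi s -> phi_cauchy m phi t ->
  completion_ext (fun n => a *: s n + t n) = a *: completion_ext s + completion_ext t.
Proof.
move=> s_cauchy t_cauchy; apply: ru_limE.
have -> : (fun n => T (a *: s n + t n)) = (fun n => a *: T (s n) + T (t n)).
  by apply/funext => n; exact: T_lin.1.
exact: ru_cvgZD (completion_ext_cvg s_cauchy) (completion_ext_cvg t_cauchy).
Qed.

Lemma completion_extJ s : phi_cauchy m phi s ->
  completion_ext (fun n => J (s n)) = J (completion_ext s).
Proof.
move=> s_cauchy; apply: ru_limE.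
have -> : (fun n => T (J (s n))) = (fun n => J (T (s n))) by apply/funext => n; exact: T_lin.2.
exact: ru_cvg_contraction J_lin m_J (completion_ext_cvg s_cauchy).
Qed.

Lemma completion_ext_bound s : phi_cauchy m phi s ->
  gauge_norm le m u (completion_ext s) <= c * completion_norm m phi s.
Proof.
move=> s_cauchy; have L_ge0 := completion_norm_ge0 s_cauchy.
have := phinorm_cvg s_cauchy; rewrite -/(completion_norm m phi s).
set L := completion_norm m phi s => phi_cvg.
apply: gauge_norm_le => [|e e0]; first exact: mulr_ge0.
have e20 : 0 < e / 2 by rewrite divr_gt0.
near \oo => n.
have := modulus_triangle m_mod (completion_ext s - T (s n)) (T (s n)).
rewrite subrK => /vle_trans; apply.
rewrite (_ : c * L + e = e / 2 + (c * L + e / 2)); last by lra.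
rewrite scalerDl modulusB; apply: vlerD.
  by near: n; exact: completion_ext_cvg.
apply: vle_trans (Tc _) (vlerZ2r _ u_ge0); near: n.
apply: filterS (cvgr_dist_lt _ _ phi_cvg _ (divr_gt0 e20 c1_gt0)) => n.
rewrite ltr_distlC /phinorm => /andP[_]; move: (divDr1_mul_lt c0 e20).
move: (e / 2 / (c + 1)) => d dc /ltW /(ler_wpM2l c0).
by rewrite mulrDr; lra.
Unshelve. all: by end_near.
Qed.

End Bounded.

Lemma cond_i_iii : cond_i le m u phi T -> cond_iii le m J u phi T.
Proof.
move=> [c [c0 Tc]]; exists completion_ext; split.
- exact: completion_ext_wd c0 Tc.
- exact: completion_ext_Eu c0 Tc.
- by split; [exact: completion_extZD c0 Tc | exact: completion_extJ c0 Tc].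
- by exists c; split => //; exact: completion_ext_bound c0 Tc.
- exact: completion_ext_cst.
Qed.

Lemma prop22_equiv_of : (cond_ii le iota u phi T -> cond_i le m u phi T) ->
  real_op iota T -> prop22_equiv le m J iota u phi T.
Proof.
move=> ii_i T_real; split; split.
- exact: cond_i_ii.
- exact: ii_i.
- by move/ii_i; exact: cond_i_iii.
- by move/cond_iii_i; exact: cond_i_ii.
Qed.

End Operator.
End Modulus.

Lemma real_cond_ii_i u phi T : le 0 u -> strictly_positive_functional le phi ->
  linear T -> cond_ii le id u phi T -> cond_i le lab u phi T.
Proof.
move=> u_ge0 phi_pos T_lin [c [c0 Tc]].
have T_pos f : le 0 f -> le (T f) ((c * phi f) *: u) /\ le (- T f) ((c * phi f) *: u).
  move=> f0; have [[g1 [g1_ge0 e1]] [g2 [g2_ge0 e2]]] := Tc f f0.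
  split; apply/vsubr_ge0; first by rewrite e2.
  by rewrite opprK addrC e1.
exists (c * 3); split; first by rewrite mulr_ge0.
move=> x; have q_ge0 : le 0 (lab x - x) by apply/vsubr_ge0; exact: labs_ge.
have [p_le Np_le] := T_pos _ (labs_ge0 x).
have [q_le Nq_le] := T_pos _ q_ge0.
have Tx : T x = T (lab x) - T (lab x - x) by rewrite -(linB T_lin) opprB addrC subrK.
apply: (@vle_trans ((c * phi (lab x) + c * phi (lab x - x)) *: u)).
  apply: labs_le; rewrite Tx scalerDl; first exact: vlerD p_le Nq_le.
  by rewrite opprB addrC; apply: vlerD Np_le q_le.
(* [<phi, |x|> + <phi, |x| - x> <= 3 <phi, |x|>] as [-<phi, x> <= <phi, |x|>] *)
apply: vlerZ2r u_ge0; rewrite (linB (positive_functional_linear phi_pos)).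
have := positive_functional_mono phi_pos (labs_geN x).
rewrite (linN (positive_functional_linear phi_pos)).
have := positive_functional_ge0 phi_pos (labs_ge0 x); nra.
Qed.

Lemma real_prop22 u phi T : le 0 u -> strictly_positive_functional le phi ->
  scalar_linear id T -> prop22_equiv le lab id id u phi T.
Proof.
move=> u_ge0 phi_pos T_lin.
apply: (prop22_equiv_of labs_modulus u_ge0 phi_pos) => //.
- by move=> v; exact: vle_refl.
- by move=> v /(ru_complete u_ge0).
- exact: real_cond_ii_i T_lin.1.
- by move=> x; exists (T x).
Qed.

Lemma creal_linear : linear creal.
Proof. by move=> a x y; rewrite /creal; congr (_, _); rewrite /= scaler0 addr0. Qed.

Lemma complex_cond_ii_i u phi T : le 0 u -> strictly_positive_functional le phi ->
  scalar_linear cmuli T -> real_op creal T ->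
  cond_ii le creal u phi T -> cond_i le cab u phi T.
Proof.
move=> u_ge0 phi_pos [T_lin T_J] T_real [c [c0 Tc]].
pose Tr x := (T (creal x)).1.
have TrE x : T (creal x) = creal (Tr x) by rewrite /Tr; have [y ->] := T_real x.
have Tr_lin : linear Tr by move=> a x y; rewrite /Tr creal_linear T_lin.
have Tr_ii : cond_ii le id u phi Tr.
  exists c; split => // f f0; have [[g1 [g1_ge0 e1]] [g2 [g2_ge0 e2]]] := Tc f f0.
  by split; [exists g1 | exists g2]; split => //;
    [move: e1 | move: e2]; rewrite TrE => /(congr1 fst).
have [c' [c'0 Tr_i]] := real_cond_ii_i u_ge0 phi_pos Tr_lin Tr_ii.
exists c'; split => // -[x y].
have -> : T (x, y) = (Tr x, Tr y).
  have -> : (x, y) = creal x + cmuli (creal y).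
    by rewrite /creal /cmuli; congr (_, _); rewrite /= ?oppr0 ?addr0 ?add0r.
  rewrite (linD T_lin) T_J !TrE /creal /cmuli; congr (_, _); rewrite /= ?oppr0 ?addr0 ?add0r //.
apply: cabs_le => t.
have -> : cproj (Tr x, Tr y) t = Tr (cproj (x, y) t).
  by rewrite /cproj /= (linD Tr_lin) !(linZ Tr_lin).
apply: vle_trans (labs_ge _) (vle_trans (Tr_i _) _).
apply: vlerZ2r u_ge0; rewrite ler_wpM2l //.
exact: positive_functional_mono phi_pos (labs_cproj_le _ _).
Qed.

Lemma complex_prop22 u phi T : le 0 u -> strictly_positive_functional le phi ->
  scalar_linear cmuli T -> real_op creal T -> prop22_equiv le cab cmuli creal u phi T.
Proof.
move=> u_ge0 phi_pos T_lin T_real.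
apply: (prop22_equiv_of cabs_modulus u_ge0 phi_pos) => //.
- by move=> a z w; rewrite /cmuli; congr (_, _); rewrite /= ?scalerN ?opprD.
- exact: cabs_cmuli_le.
- exact: creal_linear.
- exact: cabs_creal.
- by move=> v; exact: cabs_ru_complete u_ge0.
- exact: complex_cond_ii_i.
Qed.

End LatticeNorm.
End VectorLattice.

Theorem proposition2p2 (R : realType) (E : completeNormedModType R)
  (le : E -> E -> Prop) (u : E) (phi : E -> R) :
  banach_lattice le -> le 0 u -> strictly_positive_functional le phi ->
  (* real Banach lattice E *)
  (forall T : E -> E,
     scalar_linear (@id E) T -> bounded_op (labs le) T ->
     prop22_equiv le (labs le) (@id E) (@id E) u phi T) /\
  (* complex Banach lattice E_C = E + iE *)
  (forall T : (E * E)%type -> (E * E)%type,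
     scalar_linear (@cmuli R E) T -> bounded_op (cabs le) T ->
     real_op (@creal R E) T ->
     prop22_equiv le (cabs le) (@cmuli R E) (@creal R E) u phi T).
Proof.
move=> [vl lattice_norm] u_ge0 phi_pos; split => T T_lin _.
- exact: (real_prop22 vl lattice_norm u_ge0 phi_pos T_lin).
- exact: (complex_prop22 vl lattice_norm u_ge0 phi_pos T_lin).
Qed.
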